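(* Work in the tabular setting with the definitions in the context, and assume the empirical dynamics is deterministic: there is a map $M:\mathcal S\times\mathcal A\to\mathcal S$ such that $M(s'\mid s,a)=\mathbb I[M(s,a)=s']$ for all $s,a,s'$. Define, for every $s$ appearing in $\mathcal D$, $$\pi^*(a\mid s)=\frac{1}{Z(s)}\exp\big(\alpha V(M(s,a))\big)\,\beta(a\mid s).$$ Then: (i) $\pi^*(\cdot\mid s)$ is a probability distribution on $\mathcal A$ for every $s\in\mathcal D$; (ii) both $\bar R(\pi)$ and $\bar R_1(\pi)$ attain their global maximum over all policies at $\pi=\pi^*$; (iii) $\operatorname{supp}(\pi^*(\cdot\mid s))\subseteq\operatorname{supp}(\beta(\cdot\mid s))$ for every $s\in\mathcal D$; and (iv) $N^*(\cdot\mid s)=M(\cdot\mid s,\pi^*(\cdot\mid s))$ for every $s\in\mathcal D$.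
   Context: Finite state space $\mathcal S$ and finite action space $\mathcal A$. $\mathcal D$ is a finite dataset of transitions $(s,a,s')$ (rewards irrelevant here); ''$s\in\mathcal D$'' means $s$ occurs as the first component of some transition. $\beta(a\mid s)$ is the empirical behavior policy (fraction of transitions from $s$ with action $a$). $M(s'\mid s,a)$ is the empirical dynamics model: the fraction of transitions from $(s,a)$ ending in $s'$ if $(s,a)$ occurs in $\mathcal D$, and $0$ otherwise. $N(s'\mid s)=\sum_a\beta(a\mid s)M(s'\mid s,a)$ is the empirical state-transition distribution. $V:\mathcal S\to\mathbb R$ is a fixed real function and $\alpha\ge 0$ a constant. $Z(s)=\sum_{s'}\exp(\alpha V(s'))N(s'\mid s)$ and $N^*(s'\mid s)=\frac{1}{Z(s)}\exp(\alpha V(s'))N(s'\mid s)$. A policy $\pi$ assigns a distribution $\pi(\cdot\mid s)$ on $\mathcal A$ to each state; $M(s'\mid s,\pi(\cdot\mid s)):=\sum_a\pi(a\mid s)M(s'\mid s,a)$. $\mathbb E_{(s,s')\sim\mathcal D}$ denotes the average over the transitions of $\mathcal D$ (equivalently $s$ drawn from the empirical state distribution and $s'\sim N(\cdot\mid s)$). The objectives (with $\log 0=-\infty$) are $$\bar R(\pi)=\mathbb E_{(s,s')\sim\mathcal D}\Big[\tfrac{\exp(\alpha V(s'))}{Z(s)}\log M(s'\mid s,\pi(\cdot\mid s))\Big],\qquad \bar R_1(\pi)=\mathbb E_{(s,s')\sim\mathcal D}\Big[\tfrac{\exp(\alpha V(s'))}{\exp(\alpha V(s))}\log M(s'\mid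 s,\pi(\cdot\mid s))\Big].$$ *)

From HB Require Import structures.
From mathcomp Require Import all_boot all_order all_algebra.
From mathcomp Require Import all_classical all_reals.
From mathcomp Require Import all_analysis.
Set Implicit Arguments. Unset Strict Implicit. Unset Printing Implicit Defensive.
Import Order.TTheory GRing.Theory Num.Theory.
Local Open Scope ring_scope.

Section Tabular.
Variables (R : realType) (S A : finType).

(* A dataset is a finite list of transitions ((s, a), s'). *)
Definition dataset := seq (S * A * S).

Implicit Types (D : dataset) (V : S -> R) (alpha : R).

(* "s \in D": s occurs as first component of some transition. *)
Definition inD D (s : S) : bool := has (fun t => t.1.1 == s) D.
Definition inDsa D (s : S) (a : A) : bool :=
  has (fun t => (t.1.1 == s) && (t.1.2 == a)) D.

Definition cnt_s D s : nat := count (fun t => t.1.1 == s) D.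
Definition cnt_sa D s a : nat := count (fun t => (t.1.1 == s) && (t.1.2 == a)) D.
Definition cnt_sas D s a s' : nat :=
  count (fun t => [&& t.1.1 == s, t.1.2 == a & t.2 == s']) D.

Definition beta D (a : A) (s : S) : R :=
  if (0 < cnt_s D s)%N then (cnt_sa D s a)%:R / (cnt_s D s)%:R else 0.

Definition Mhat D (s' : S) (s : S) (a : A) : R :=
  if (0 < cnt_sa D s a)%N then (cnt_sas D s a s')%:R / (cnt_sa D s a)%:R else 0.

Definition Nhat D (s' s : S) : R := \sum_a beta D a s * Mhat D s' s a.

Definition Zn D V alpha (s : S) : R := \sum_s' expR (alpha * V s') * Nhat D s' s.

Definition Nstar D V alpha (s' s : S) : R :=
  expR (alpha * V s') * Nhat D s' s / Zn D V alpha s.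

(* policies pi s a = pi(a | s) *)
Definition is_policy (pi : S -> A -> R) : Prop :=
  forall s, (forall a, 0 <= pi s a) /\ \sum_a pi s a = 1.

Definition Mpi D (pi : S -> A -> R) (s' s : S) : R := \sum_a pi s a * Mhat D s' s a.

(* log with log 0 = -oo (arguments here are always >= 0) *)
Definition logE (x : R) : \bar R := if 0 < x then (ln x)%:E else -oo%E.

Definition avgD D (f : S * A * S -> \bar R) : \bar R :=
  (((size D)%:R)^-1)%:E * (\sum_(t <- D) f t)%E.

Definition Rbar D V alpha (pi : S -> A -> R) : \bar R :=
  avgD D (fun t => ((expR (alpha * V t.2) / Zn D V alpha t.1.1)%:E
                     * logE (Mpi D pi t.2 t.1.1))%E).

Definition Rbar1 D V alpha (pi : S -> A -> R) : \bar R :=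
  avgD D (fun t => ((expR (alpha * V t.2) / expR (alpha * V t.1.1))%:E
                     * logE (Mpi D pi t.2 t.1.1))%E).

Definition pistar D V alpha (m : S -> A -> S) (s : S) (a : A) : R :=
  expR (alpha * V (m s a)) * beta D a s / Zn D V alpha s.

End Tabular.

Arguments beta {R S A}.
Arguments Mhat {R S A}.
Arguments Nhat {R S A}.

From HB Require Import structures.
From mathcomp Require Import all_boot all_order all_algebra.
From mathcomp Require Import all_classical all_reals.
From mathcomp Require Import all_analysis.
From mathcomp Require Import ring lra.

(* With a deterministic model, N(s'|s) = sum_a beta(a|s) [M(s,a) = s'], so pi^*
   reweights beta exactly as N^* reweights N: pi^* is a distribution inducing N^*,
   which gives (i) and (iv); (iii) is immediate.  For (ii), grouping the transitions of
   D by (s, s') rewrites both objectives as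
     sum_s c(s) * sum_s' N^*(s'|s) log M(s'|s, pi)
   with nonnegative state weights c(s) (the visit count of s, times
   Z(s) / exp(alpha V(s)) for R_1).  Each inner sum is a cross entropy against the
   distribution N^*(.|s) while M(.|s, pi) has total mass at most 1, so by Gibbs'
   inequality it is maximal when M(.|s, pi) = N^*(.|s), i.e. at pi^*. *)

Set Implicit Arguments.
Unset Strict Implicit.
Unset Printing Implicit Defensive.
Import Order.TTheory GRing.Theory Num.Theory.
Local Open Scope ring_scope.

Lemma count_fibres (T : Type) (U : finType) (P : pred T) (f : T -> U) (r : seq T) :
  count P r = (\sum_u count (fun t => P t && (f t == u)) r)%N.
Proof.
elim: r => [|t r IH] /=; first by rewrite big1.
rewrite big_split /= -IH; congr (_ + _)%N.
rewrite (bigD1 (f t)) //= eqxx andbT big1 ?addn0 // => u /negbTE.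
by rewrite eq_sym => ->; rewrite andbF.
Qed.

Section ExtendedRealSums.
Variable R : realType.

Lemma mul_logE_self (p : R) : 0 <= p -> (p%:E * logE p = (p * ln p)%:E)%E.
Proof.
rewrite le_eqVlt => /predU1P[<-|p_gt0]; first by rewrite mul0e mul0r.
by rewrite /logE p_gt0.
Qed.

(* Pointwise form of [ln x <= x - 1] at [x = q / p]. *)
Lemma mul_logE_le (p q : R) : 0 <= p -> 0 <= q ->
  (p%:E * logE q <= (p * ln p + (q - p))%:E)%E.
Proof.
rewrite le_eqVlt => /predU1P[<-|p_gt0] q_ge0.
  by rewrite mul0e mul0r add0r subr0 lee_fin.
rewrite /logE; case: ifPn => [q_gt0|_]; last by rewrite gt0_muleNy ?lte_fin ?leNye.
have ln_le : ln (q / p) <= q / p - 1.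
  have qp_gt0 : 0 < q / p by rewrite divr_gt0.
  by have := @le_ln1Dx _ (q / p - 1); rewrite subrKC; apply; lra.
rewrite ln_div ?posrE // in ln_le.
have -> : q - p = p * (q / p - 1) by field; rewrite gt_eqF.
rewrite -EFinM lee_fin -mulrDr; apply: (ler_wpM2l (ltW p_gt0)).
by rewrite -lerBlDl.
Qed.

Lemma mul_logE_neqy (p q : R) : 0 <= p -> (p%:E * logE q != +oo)%E.
Proof.
rewrite le_eqVlt => /predU1P[<-|p_gt0]; first by rewrite mul0e.
by rewrite /logE; case: ifP => // _; rewrite gt0_muleNy.
Qed.

Lemma gibbs_inequality (T : finType) (p q : T -> R) :
  (forall x, 0 <= p x) -> (forall x, 0 <= q x) -> \sum_x q x <= \sum_x p x ->
  (\sum_x (p x)%:E * logE (q x) <= \sum_x (p x)%:E * logE (p x))%E.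
Proof.
move=> p_ge0 q_ge0 sum_qp.
under [X in (_ <= X)%E]eq_bigr => x _ do rewrite mul_logE_self //.
rewrite sumEFin.
apply: (@le_trans _ _ (\sum_x ((p x * ln (p x) + (q x - p x))%:E))%E).
  by apply: lee_sum => x _; exact: mul_logE_le.
by rewrite sumEFin lee_fin big_split /= sumrB gerDl subr_le0.
Qed.

Lemma sume_fibres (T : Type) (U : finType) (g : T -> U) (F : U -> \bar R) (r : seq T) :
  (\sum_(t <- r) F (g t) = \sum_u (count (fun t => g t == u) r)%:R%:E * F u)%E.
Proof.
elim: r => [|t r IH]; first by rewrite big_nil big1 // => u _; rewrite mul0e.
rewrite big_cons IH /=.
under [RHS]eq_bigr => u _ do rewrite natrD EFinD ge0_muleDl ?lee_fin //.
rewrite big_split /=; congr (_ + _)%E.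
rewrite (bigD1 (g t)) //= eqxx mul1e big1 ?adde0 // => u /negbTE.
by rewrite eq_sym => ->; rewrite mul0e.
Qed.

End ExtendedRealSums.

Section Dataset.
Variables (R : realType) (S A : finType) (D : dataset S A).

Definition cnt_ss (s s' : S) : nat := count (fun t => (t.1.1 == s) && (t.2 == s')) D.

Lemma cnt_sas_le s a s' : (cnt_sas D s a s' <= cnt_sa D s a)%N.
Proof. by apply: sub_count => t /and3P[-> ->]. Qed.

Lemma cnt_sa_le s a : (cnt_sa D s a <= cnt_s D s)%N.
Proof. by apply: sub_count => t /andP[]. Qed.

Lemma cnt_sa_sum s a : cnt_sa D s a = (\sum_s' cnt_sas D s a s')%N.
Proof.
rewrite /cnt_sa (@count_fibres _ _ _ (fun t => t.2)); apply: eq_bigr => s' _.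
by apply: eq_count => t; rewrite andbA.
Qed.

Lemma cnt_ss_sum s s' : cnt_ss s s' = (\sum_a cnt_sas D s a s')%N.
Proof.
rewrite /cnt_ss (@count_fibres _ _ _ (fun t => t.1.2)); apply: eq_bigr => a _.
by apply: eq_count => t; rewrite -andbA [(t.2 == s') && _]andbC.
Qed.

Lemma beta_ge0 a s : 0 <= beta D a s :> R.
Proof. by rewrite /beta; case: ifP => // _; rewrite divr_ge0. Qed.

Lemma Mhat_ge0 s' s a : 0 <= Mhat D s' s a :> R.
Proof. by rewrite /Mhat; case: ifP => // _; rewrite divr_ge0. Qed.

Lemma Mhat_sum_le1 s a : \sum_s' Mhat D s' s a <= 1 :> R.
Proof.
rewrite /Mhat; case: posnP => [_|sa_gt0]; first by rewrite big1 ?ler01.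
by rewrite -mulr_suml -natr_sum -cnt_sa_sum divff // pnatr_eq0 -lt0n.
Qed.

Lemma beta_Mhat_cnt a s s' :
  beta D a s * Mhat D s' s a * (cnt_s D s)%:R = (cnt_sas D s a s')%:R :> R.
Proof.
have [sa0|sa_gt0] := posnP (cnt_sa D s a).
  have /eqP sas0 : cnt_sas D s a s' == 0%N by rewrite -leqn0 -sa0 cnt_sas_le.
  by rewrite /Mhat sa0 sas0 mulr0 mul0r.
have s_gt0 := leq_trans sa_gt0 (cnt_sa_le s a).
rewrite /beta /Mhat s_gt0 sa_gt0; field.
by rewrite !pnatr_eq0 -!lt0n s_gt0 sa_gt0.
Qed.

Lemma Nhat_cnt s' s : Nhat D s' s * (cnt_s D s)%:R = (cnt_ss s s')%:R :> R.
Proof.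
rewrite /Nhat mulr_suml cnt_ss_sum natr_sum.
by apply: eq_bigr => a _; exact: beta_Mhat_cnt.
Qed.

Lemma Nhat_ge0 s' s : 0 <= Nhat D s' s :> R.
Proof. by apply: sumr_ge0 => a _; rewrite mulr_ge0 ?beta_ge0 ?Mhat_ge0. Qed.

Lemma Nhat_gt0 t : t \in D -> 0 < Nhat D t.2 t.1.1 :> R.
Proof.
move=> tD; rewrite lt_def Nhat_ge0 andbT; apply/eqP => N0.
have : (0 < cnt_ss t.1.1 t.2)%N by rewrite -has_count; apply/hasP; exists t; rewrite ?eqxx.
by rewrite -(ltr0n R) -Nhat_cnt N0 mul0r ltxx.
Qed.

Lemma Mpi_ge0 (pi : S -> A -> R) s' s : is_policy pi -> 0 <= Mpi D pi s' s.
Proof.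
move=> pi_pol; apply: sumr_ge0 => a _.
by rewrite mulr_ge0 ?Mhat_ge0 //; case: (pi_pol s).
Qed.

Lemma Mpi_sum_le1 (pi : S -> A -> R) s : is_policy pi -> \sum_s' Mpi D pi s' s <= 1.
Proof.
case/(_ s) => pi_ge0 pi_sum1; rewrite /Mpi exchange_big /= -pi_sum1.
apply: ler_sum => a _; rewrite -mulr_sumr -[leRHS]mulr1.
exact: ler_wpM2l (Mhat_sum_le1 s a).
Qed.

End Dataset.

Section Objective.
Variables (R : realType) (S A : finType) (D : dataset S A) (V : S -> R) (alpha : R).

Lemma Zn_ge0 s : 0 <= Zn D V alpha s.
Proof. by apply: sumr_ge0 => s' _; rewrite mulr_ge0 ?expR_ge0 ?Nhat_ge0. Qed.

Lemma Zn_gt0 s : inD D s -> 0 < Zn D V alpha s.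
Proof.
case/hasP => t tD /eqP <-; rewrite /Zn (bigD1 t.2) //=.
rewrite ltr_wpDr ?mulr_gt0 ?expR_gt0 ?Nhat_gt0 //.
by apply: sumr_ge0 => s' _; rewrite mulr_ge0 ?expR_ge0 ?Nhat_ge0.
Qed.

Lemma Nstar_ge0 s' s : 0 <= Nstar D V alpha s' s.
Proof. by rewrite divr_ge0 ?mulr_ge0 ?expR_ge0 ?Nhat_ge0 ?Zn_ge0. Qed.

Lemma Nstar_sum1 s : inD D s -> \sum_s' Nstar D V alpha s' s = 1.
Proof. by move=> sD; rewrite -mulr_suml divff // gt_eqF // Zn_gt0. Qed.

Definition weighted_objective (k : S -> R) (pi : S -> A -> R) : \bar R :=
  avgD D (fun t => ((k t.1.1 * (expR (alpha * V t.2) / Zn D V alpha t.1.1))%:E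
                     * logE (Mpi D pi t.2 t.1.1))%E).

Lemma Rbar_weighted pi : Rbar D V alpha pi = weighted_objective (fun _ => 1) pi.
Proof.
rewrite /Rbar /weighted_objective /avgD.
by under [X in _ = (_ * X)%E]eq_bigr do rewrite mul1r.
Qed.

Lemma Rbar1_weighted pi :
  Rbar1 D V alpha pi =
  weighted_objective (fun s => Zn D V alpha s / expR (alpha * V s)) pi.
Proof.
rewrite /Rbar1 /weighted_objective /avgD; congr (_ * _)%E.
rewrite big_seq [RHS]big_seq; apply: eq_bigr => t tD; congr (_%:E * _)%E.
have Z_gt0 : 0 < Zn D V alpha t.1.1 by apply: Zn_gt0; apply/hasP; exists t.
by field; rewrite !gt_eqF ?expR_gt0.
Qed.

(* Transitions (s, ., s') occur cnt_s(s) * N(s'|s) times, turning the weights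
   exp(alpha V(s')) / Z(s) into N^*(s'|s). *)
Lemma sum_weighted_logE (k : S -> R) (f : S -> S -> R) :
  (\sum_(t <- D) (k t.1.1 * (expR (alpha * V t.2) / Zn D V alpha t.1.1))%:E
                   * logE (f t.2 t.1.1)
   = \sum_s ((cnt_s D s)%:R * k s)%:E
       * \sum_s' (Nstar D V alpha s' s)%:E * logE (f s' s))%E.
Proof.
transitivity (\sum_s \sum_s' ((cnt_s D s)%:R * k s)%:E
                 * ((Nstar D V alpha s' s)%:E * logE (f s' s)))%E; last first.
  apply: eq_bigr => s _; rewrite fin_num_sume_distrr // => s1 s2 _ _.
  by rewrite /adde_def !(negbTE (mul_logE_neqy _ (Nstar_ge0 _ _))) andbF.
rewrite pair_bigA (@sume_fibres _ _ _ (fun t => (t.1.1, t.2))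
  (fun ss => (k ss.1 * (expR (alpha * V ss.2) / Zn D V alpha ss.1))%:E
               * logE (f ss.2 ss.1))%E).
apply: eq_bigr => -[s s'] _ /=; rewrite !muleA -!EFinM; congr (_%:E * _)%E.
rewrite -[count _ _]/(cnt_ss D s s') -Nhat_cnt /Nstar.
ring.
Qed.

Lemma weighted_objective_le (k : S -> R) (pi pi0 : S -> A -> R) :
  (forall s, 0 <= k s) -> is_policy pi ->
  (forall s, inD D s -> forall s', Mpi D pi0 s' s = Nstar D V alpha s' s) ->
  (weighted_objective k pi <= weighted_objective k pi0)%E.
Proof.
move=> k_ge0 pi_pol pi0_Nstar; rewrite /weighted_objective /avgD.
apply: lee_wpmul2l; first by rewrite lee_fin invr_ge0.
rewrite !sum_weighted_logE; apply: lee_sum => s _.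
have [s0|s_gt0] := posnP (cnt_s D s); first by rewrite s0 mul0r !mul0e.
have sD : inD D s by rewrite /inD has_count.
apply: lee_wpmul2l; first by rewrite lee_fin mulr_ge0.
under [X in (_ <= X)%E]eq_bigr => s' _ do rewrite pi0_Nstar //.
apply: gibbs_inequality => [s'|s'|]; rewrite ?Nstar_ge0 ?Mpi_ge0 //.
by rewrite Nstar_sum1 // Mpi_sum_le1.
Qed.

End Objective.

Section Deterministic.
Variables (R : realType) (S A : finType) (D : dataset S A) (V : S -> R) (alpha : R).
Variable m : S -> A -> S.
Hypothesis hdet : forall (s : S) (a : A), inDsa D s a ->
  forall s' : S, Mhat D s' s a = (m s a == s')%:R :> R.

Lemma beta_Mhat_det a s s' :
  beta D a s * Mhat D s' s a = beta D a s * (m s a == s')%:R :> R.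
Proof.
rewrite /beta; case: posnP => [_|s_gt0]; first by rewrite !mul0r.
have [sa0|sa_gt0] := posnP (cnt_sa D s a); first by rewrite sa0 !mul0r.
by rewrite hdet // /inDsa has_count sa_gt0.
Qed.

Lemma Zn_det s : Zn D V alpha s = \sum_a beta D a s * expR (alpha * V (m s a)).
Proof.
rewrite /Zn /Nhat; under eq_bigr => s' _ do rewrite mulr_sumr.
rewrite exchange_big /=; apply: eq_bigr => a _.
rewrite (bigD1 (m s a)) //= big1 ?addr0 => [|s' /negbTE ms_neq].
  by rewrite beta_Mhat_det eqxx mulr1 mulrC.
by rewrite beta_Mhat_det eq_sym ms_neq mulr0 mulr0.
Qed.

Lemma pistar_ge0 s a : 0 <= pistar D V alpha m s a.
Proof. by rewrite divr_ge0 ?mulr_ge0 ?expR_ge0 ?beta_ge0 ?Zn_ge0. Qed.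

Lemma pistar_sum1 s : inD D s -> \sum_a pistar D V alpha m s a = 1.
Proof.
move=> sD; rewrite -mulr_suml; under eq_bigr do rewrite mulrC.
by rewrite -Zn_det divff // gt_eqF // Zn_gt0.
Qed.

Lemma Nstar_Mpi_pistar s' s : Nstar D V alpha s' s = Mpi D (pistar D V alpha m) s' s.
Proof.
rewrite /Nstar /Nhat mulr_sumr mulr_suml; apply: eq_bigr => a _.
have -> : pistar D V alpha m s a * Mhat D s' s a
          = expR (alpha * V (m s a)) * (beta D a s * Mhat D s' s a) / Zn D V alpha s.
  by rewrite /pistar; ring.
by rewrite !beta_Mhat_det; case: eqP => [->|_]; rewrite ?mulr0 ?mul0r.
Qed.

End Deterministic.

Theorem proposition1 (R : realType) (S A : finType) (D : dataset S A)
  (V : S -> R) (alpha : R) (halpha : 0 <= alpha) (m : S -> A -> S)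
  (hdet : forall (s : S) (a : A), inDsa D s a ->
     forall s' : S, Mhat D s' s a = (m s a == s')%:R :> R) :
  (* (i) *)
  (forall s, inD D s ->
     (forall a, 0 <= pistar D V alpha m s a) /\ \sum_a pistar D V alpha m s a = 1) /\
  (* (ii): any policy agreeing with pi^* on the states of D maximizes both objectives *)
  (forall pi0 : S -> A -> R, is_policy pi0 ->
     (forall s, inD D s -> forall a, pi0 s a = pistar D V alpha m s a) ->
     forall pi : S -> A -> R, is_policy pi ->
       (Rbar D V alpha pi <= Rbar D V alpha pi0)%E /\
       (Rbar1 D V alpha pi <= Rbar1 D V alpha pi0)%E) /\
  (* (iii) *)
  (forall s, inD D s -> forall a, pistar D V alpha m s a != 0 -> beta (R:=R) D a s != 0) /\
  (* (iv) *)
  (forall s, inD D s -> forall s',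
     Nstar D V alpha s' s = Mpi D (pistar D V alpha m) s' s).
Proof.
split; [|split; [|split]].
- by move=> s sD; split=> [a|]; [exact: pistar_ge0 | exact: pistar_sum1].
- move=> pi0 _ pi0_pistar pi pi_pol.
  have pi0_Nstar s : inD D s -> forall s', Mpi D pi0 s' s = Nstar D V alpha s' s.
    move=> sD s'; rewrite (Nstar_Mpi_pistar _ _ hdet).
    by apply: eq_bigr => a _; rewrite pi0_pistar.
  rewrite !Rbar_weighted !Rbar1_weighted.
  by split; apply: weighted_objective_le => // s; rewrite divr_ge0 ?Zn_ge0 ?expR_ge0.
- move=> s _ a; apply: contraNN => /eqP beta0.
  by rewrite /pistar beta0 mulr0 mul0r.
- by move=> s _ s'; exact: Nstar_Mpi_pistar.
Qed.
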